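(* Let $t>0$ and let $P,Q$ be $t$-convex polygons in the Lorentz plane with parallel edges, i.e. with the same inward unit normals $\eta_1,\dots,\eta_n$ of their fundamental edges, and with support vectors $h(P)=(h_1(P),\dots,h_n(P))$, $h(Q)=(h_1(Q),\dots,h_n(Q))$. Then $$\operatorname{coarea}(P,Q)^2\leq \operatorname{coarea}(P)\operatorname{coarea}(Q),$$ with equality if and only if $P$ and $Q$ are homothetic, i.e. there is $\lambda>0$ with $h_i(P)=\lambda h_i(Q)$ for all $i$.
   Context: Lorentz plane: $\mathbb{R}^2$ with $\langle x,y\rangle_1=x_1y_1-x_2y_2$; $\mathbb{H}=\{x:\langle x,x\rangle_1=-1,x_2>0\}$; $H_s=\begin{pmatrix}\cosh s&\sinh s\\ \sinh s&\cosh s\end{pmatrix}$. A $t$-convex polygon is the intersection, over $k\in\mathbb{Z}$ and $i=1,\dots,n$, of the half-planes $\{x:\langle x,H_t^k\eta_i\rangle_1\le -h_i\}$, for pairwise distinct $\eta_i\in\mathbb{H}$ and $h_i>0$, taken minimal so each $\eta_i$ is the inward normal of a genuine edge. Its fundamental edges are labeled so that $\eta_1$ is the normal of a chosen edge, $\eta_2$ the normal of the edge to its right, etc., up to $\eta_{n+1}=H_t\eta_1$; $h_i(P)$ is the support number of the edge with normal $\eta_i$; $\varphi_i>0$ is defined by $\cosh\varphi_i=-\langle\eta_i,\eta_{i+1}\rangle_1$, so $\varphi_1+\dots+\varphi_n=t$. With indices cyclic mod $n$, the mixed coarea of $h,k\in\mathbb{R}^n$ is $\operatorname{coarea}(h,k)=\frac12\sum_{i=1}^n\big(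 h_i\frac{k_i\cosh\varphi_{i-1}-k_{i-1}}{\sinh\varphi_{i-1}}+h_i\frac{k_i\cosh\varphi_i-k_{i+1}}{\sinh\varphi_i}\big)$; $\operatorname{coarea}(P,Q):=\operatorname{coarea}(h(P),h(Q))$ and $\operatorname{coarea}(P):=\operatorname{coarea}(P,P)$ (which equals half the sum over fundamental edges of support number times Lorentzian edge length). *)

From Stdlib Require Import Reals Lra Lia List.
Import ListNotations.
Open Scope R_scope.

Definition pt := (R * R)%type.

Definition lprod (x y : pt) : R := fst x * fst y - snd x * snd y.

Definition in_H (x : pt) : Prop := lprod x x = -1 /\ 0 < snd x.

Definition boost (s : R) (x : pt) : pt :=
  (cosh s * fst x + sinh s * snd x, sinh s * fst x + cosh s * snd x).

(* H_t^k = H_{k t} for k : Z. *)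
Definition boost_pow (t : R) (k : Z) (x : pt) : pt := boost (IZR k * t) x.

(* The region cut out by the half-planes <x, H_t^k eta_i> <= -h_i,
   k in Z, 0 <= i < n (indices 0-based: eta 0 .. eta (n-1)). *)
Definition tpoly (t : R) (n : nat) (eta : nat -> pt) (h : nat -> R) (x : pt) : Prop :=
  forall (k : Z) (i : nat), (i < n)%nat -> lprod x (boost_pow t k (eta i)) <= - h i.

Definition genuine_edge (t : R) (n : nat) (eta : nat -> pt) (h : nat -> R) (i : nat) : Prop :=
  exists x y : pt, x <> y /\ tpoly t n eta h x /\ tpoly t n eta h y /\
    lprod x (eta i) = - h i /\ lprod y (eta i) = - h i.

(* Labeling of the fundamental edges: eta_0, ..., eta_{n-1} are consecutive
   edge normals, and the next one after eta_{n-1} is H_t eta_0. Writing points of H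
   as (sinh a, cosh a), H_t shifts a by t, so this means
   a_0 < a_1 < ... < a_{n-1} < a_0 + t. *)
Definition labeled (t : R) (n : nat) (eta : nat -> pt) : Prop :=
  exists a : nat -> R,
    (forall i, (i < n)%nat -> eta i = (sinh (a i), cosh (a i))) /\
    (forall i, (i + 1 < n)%nat -> a i < a (i + 1)%nat) /\
    a (n - 1)%nat < a O + t.

Definition tconvex_data (t : R) (n : nat) (eta : nat -> pt) (h : nat -> R) : Prop :=
  (1 <= n)%nat /\
  (forall i, (i < n)%nat -> in_H (eta i)) /\
  (forall i j, (i < n)%nat -> (j < n)%nat -> i <> j -> eta i <> eta j) /\
  (forall i, (i < n)%nat -> 0 < h i) /\
  labeled t n eta /\
  (forall i, (i < n)%nat -> genuine_edge t n eta h i).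

Definition nxt (n i : nat) : nat := ((i + 1) mod n)%nat.
Definition prv (n i : nat) : nat := ((i + n - 1) mod n)%nat.

Definition eta_next (t : R) (n : nat) (eta : nat -> pt) (i : nat) : pt :=
  if Nat.eqb (i + 1) n then boost t (eta O) else eta (i + 1)%nat.

Definition cosh_phi (t : R) (n : nat) (eta : nat -> pt) (i : nat) : R :=
  - lprod (eta i) (eta_next t n eta i).
Definition sinh_phi (t : R) (n : nat) (eta : nat -> pt) (i : nat) : R :=
  sqrt (cosh_phi t n eta i ^ 2 - 1).

Definition sumn_R (n : nat) (f : nat -> R) : R :=
  fold_right Rplus 0 (map f (seq 0 n)).

Definition coarea (t : R) (n : nat) (eta : nat -> pt) (h k : nat -> R) : R :=
  / 2 * sumn_R n (fun i =>
    h i * (k i * cosh_phi t n eta (prv n i) - k (prv n i)) / sinh_phi t n eta (prv n i)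
  + h i * (k i * cosh_phi t n eta i - k (nxt n i)) / sinh_phi t n eta i).

(* The mixed coarea is a symmetric bilinear form on support vectors: pairing each term
   [h_i k_{i+1}] with its cyclic shift rewrites it as a sum over the edges of the
   forms [(cosh phi_i (a a' + b b') - a b' - b a') / sinh phi_i] in the support numbers
   [a, b] (and [a', b']) of two consecutive edges.  Since [cosh phi_i > 1] each of these
   is positive semidefinite and vanishes only for [a = b = 0], so the coarea form is
   positive definite, and the statement is the Cauchy-Schwarz inequality for it, with
   the usual discriminant argument for the equality case. *)

From Stdlib Require Import Reals Lra Lia Psatz List.
Open Scope R_scope.

Lemma fold_right_Rplus_init (l : list R) (a : R) :
  fold_right Rplus a l = fold_right Rplus 0 l + a.
Proof. induction l as [|x l IH]; simpl; [lra | rewrite IH; lra]. Qed.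

Lemma sumn_R_0 (f : nat -> R) : sumn_R 0 f = 0.
Proof. reflexivity. Qed.

Lemma sumn_R_Sr (n : nat) (f : nat -> R) : sumn_R (S n) f = sumn_R n f + f n.
Proof.
  unfold sumn_R. rewrite seq_S, map_app, fold_right_app; simpl.
  rewrite fold_right_Rplus_init. lra.
Qed.

Lemma sumn_R_Sl (n : nat) (f : nat -> R) :
  sumn_R (S n) f = f O + sumn_R n (fun i => f (S i)).
Proof. unfold sumn_R; simpl. rewrite <- seq_shift, map_map. reflexivity. Qed.

Lemma sumn_R_ext (n : nat) (f g : nat -> R) :
  (forall i, (i < n)%nat -> f i = g i) -> sumn_R n f = sumn_R n g.
Proof.
  induction n as [|n IH]; intros Hfg; [reflexivity|].
  rewrite !sumn_R_Sr, (Hfg n), IH by (try (intros; apply Hfg); lia). reflexivity.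
Qed.

Lemma sumn_R_add_scal (n : nat) (f g : nat -> R) (x : R) :
  sumn_R n (fun i => f i + x * g i) = sumn_R n f + x * sumn_R n g.
Proof. induction n as [|n IH]; [rewrite !sumn_R_0; lra|]. rewrite !sumn_R_Sr, IH. lra. Qed.

Lemma sumn_R_scal (n : nat) (f : nat -> R) (x : R) :
  sumn_R n (fun i => x * f i) = x * sumn_R n f.
Proof. induction n as [|n IH]; [rewrite !sumn_R_0; lra|]. rewrite !sumn_R_Sr, IH. lra. Qed.

Lemma sumn_R_ge0 (n : nat) (f : nat -> R) :
  (forall i, (i < n)%nat -> 0 <= f i) -> 0 <= sumn_R n f.
Proof.
  induction n as [|n IH]; intros Hf; [rewrite !sumn_R_0; lra|].
  rewrite sumn_R_Sr. pose proof (Hf n ltac:(lia)).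
  enough (0 <= sumn_R n f) by lra. apply IH. intros; apply Hf; lia.
Qed.

Lemma sumn_R_eq0 (n : nat) (f : nat -> R) :
  (forall i, (i < n)%nat -> 0 <= f i) -> sumn_R n f = 0 ->
  forall i, (i < n)%nat -> f i = 0.
Proof.
  induction n as [|n IH]; intros Hf Hsum i Hi; [lia|].
  rewrite sumn_R_Sr in Hsum. pose proof (Hf n ltac:(lia)).
  assert (0 <= sumn_R n f) by (apply sumn_R_ge0; intros; apply Hf; lia).
  destruct (Nat.eq_dec i n) as [->|Hin]; [lra|].
  apply IH; [intros; apply Hf; lia | lra | lia].
Qed.

Lemma nxt_lt (n i : nat) : (1 <= n)%nat -> (nxt n i < n)%nat.
Proof. intros; apply Nat.mod_upper_bound; lia. Qed.

Lemma prv_0 (m : nat) : prv (S m) O = m.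
Proof. unfold prv. replace (0 + S m - 1)%nat with m by lia. apply Nat.mod_small; lia. Qed.

Lemma prv_S (m i : nat) : (i < m)%nat -> prv (S m) (S i) = i.
Proof.
  intros Hi; unfold prv. replace (S i + S m - 1)%nat with (i + 1 * S m)%nat by lia.
  rewrite Nat.Div0.mod_add. apply Nat.mod_small; lia.
Qed.

Lemma nxt_prv (n i : nat) : (i < n)%nat -> nxt n (prv n i) = i.
Proof.
  intros Hi. destruct n as [|m]; [lia|]. unfold nxt. destruct i as [|i].
  - rewrite prv_0. replace (m + 1)%nat with (S m) by lia. apply Nat.Div0.mod_same.
  - rewrite prv_S by lia. replace (i + 1)%nat with (S i) by lia. apply Nat.mod_small; lia.
Qed.

Lemma sumn_R_prv (n : nat) (f : nat -> R) :
  (1 <= n)%nat -> sumn_R n (fun i => f (prv n i)) = sumn_R n f.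
Proof.
  intros Hn. destruct n as [|m]; [lia|].
  rewrite sumn_R_Sl, prv_0, sumn_R_Sr.
  rewrite (sumn_R_ext m _ f) by (intros; rewrite prv_S by lia; reflexivity). lra.
Qed.

Lemma cosh_gt_1 (x : R) : 0 < x -> 1 < cosh x.
Proof.
  intros Hx. unfold cosh. rewrite exp_Ropp.
  pose proof (exp_increasing 0 x Hx) as HE. rewrite exp_0 in HE.
  set (E := exp x) in *.
  replace ((E + / E) / 2) with (1 + (E - 1) ^ 2 / (2 * E)) by (field; lra).
  enough (0 < (E - 1) ^ 2 / (2 * E)) by lra.
  apply Rdiv_lt_0_compat; nra.
Qed.

Lemma lprod_hyperbola (a b : R) :
  lprod (sinh a, cosh a) (sinh b, cosh b) = - cosh (b - a).
Proof.
  unfold lprod, sinh, cosh; simpl. unfold Rminus.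
  rewrite Ropp_plus_distr, Ropp_involutive, !exp_plus, !exp_Ropp.
  pose proof (exp_pos a); pose proof (exp_pos b). field; lra.
Qed.

Lemma boost_hyperbola (t a : R) : boost t (sinh a, cosh a) = (sinh (a + t), cosh (a + t)).
Proof.
  unfold boost, sinh, cosh; simpl. rewrite Ropp_plus_distr, !exp_plus, !exp_Ropp.
  pose proof (exp_pos a); pose proof (exp_pos t). f_equal; field; lra.
Qed.

Lemma cosh_phi_gt_1 (t : R) (n : nat) (eta : nat -> pt) (i : nat) :
  labeled t n eta -> (i < n)%nat -> 1 < cosh_phi t n eta i.
Proof.
  intros [a [Ha [Hinc Hlast]]] Hi. unfold cosh_phi, eta_next.
  destruct (Nat.eqb_spec (i + 1) n) as [Hend|Hend].
  - rewrite Ha, (Ha O), boost_hyperbola, lprod_hyperbola, Ropp_involutive by lia.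
    apply cosh_gt_1. replace i with (n - 1)%nat by lia. lra.
  - rewrite !Ha, lprod_hyperbola, Ropp_involutive by lia.
    apply cosh_gt_1. enough (a i < a (i + 1)%nat) by lra. apply Hinc; lia.
Qed.

Lemma sinh_phi_pos (t : R) (n : nat) (eta : nat -> pt) (i : nat) :
  labeled t n eta -> (i < n)%nat -> 0 < sinh_phi t n eta i.
Proof.
  intros Hl Hi. apply sqrt_lt_R0. pose proof (cosh_phi_gt_1 t n eta i Hl Hi). nra.
Qed.

Definition edge_form (c a b a' b' : R) : R := c * (a * a' + b * b') - a * b' - b * a'.

Lemma edge_form_ge0 (c a b : R) : 1 <= c -> 0 <= edge_form c a b a b.
Proof.
  intros Hc. unfold edge_form.
  assert (0 <= (c - 1) * (a * a + b * b)) by (apply Rmult_le_pos; nra).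
  assert (0 <= (a - b) * (a - b)) by exact (Rle_0_sqr (a - b)).
  lra.
Qed.

Lemma edge_form_eq0 (c a b : R) : 1 < c -> edge_form c a b a b = 0 -> a = 0.
Proof.
  intros Hc Hab. unfold edge_form in Hab.
  assert (Ha2 : (c - 1) * (a * a) <= 0).
  { assert (0 <= (c - 1) * (b * b)) by (apply Rmult_le_pos; nra).
    assert (0 <= (a - b) * (a - b)) by exact (Rle_0_sqr (a - b)).
    lra. }
  assert (a * a <= 0) by (apply (Rmult_le_reg_l (c - 1)); lra).
  nra.
Qed.

Definition coarea_sym (t : R) (n : nat) (eta : nat -> pt) (h k : nat -> R) : R :=
  / 2 * sumn_R n (fun i =>
    edge_form (cosh_phi t n eta i) (h i) (h (nxt n i)) (k i) (k (nxt n i))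
    / sinh_phi t n eta i).

Lemma coarea_eq_sym (t : R) (n : nat) (eta : nat -> pt) (h k : nat -> R) :
  (1 <= n)%nat -> coarea t n eta h k = coarea_sym t n eta h k.
Proof.
  intros Hn. unfold coarea, coarea_sym, edge_form. f_equal.
  set (c := cosh_phi t n eta); set (s := sinh_phi t n eta).
  set (incoming := fun j => h (nxt n j) * (k (nxt n j) * c j - k j) / s j).
  set (outgoing := fun i => h i * (k i * c i - k (nxt n i)) / s i).
  transitivity (sumn_R n (fun i => incoming (prv n i) + 1 * outgoing i)).
  { apply sumn_R_ext; intros i Hi. unfold incoming, outgoing. rewrite nxt_prv by exact Hi. ring. }
  rewrite sumn_R_add_scal, sumn_R_prv, <- sumn_R_add_scal by exact Hn.
  apply sumn_R_ext; intros i _. unfold incoming, outgoing, Rdiv. ring.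
Qed.

Lemma coarea_sym_ext (t : R) (n : nat) (eta : nat -> pt) (h h' k k' : nat -> R) :
  (1 <= n)%nat ->
  (forall i, (i < n)%nat -> h i = h' i) -> (forall i, (i < n)%nat -> k i = k' i) ->
  coarea_sym t n eta h k = coarea_sym t n eta h' k'.
Proof.
  intros Hn Hh Hk. unfold coarea_sym. f_equal. apply sumn_R_ext; intros i Hi.
  pose proof (nxt_lt n i Hn). rewrite !Hh, !Hk by assumption. reflexivity.
Qed.

Lemma coarea_sym_comm (t : R) (n : nat) (eta : nat -> pt) (h k : nat -> R) :
  coarea_sym t n eta h k = coarea_sym t n eta k h.
Proof.
  unfold coarea_sym, edge_form. f_equal. apply sumn_R_ext; intros i _. f_equal. ring.
Qed.

Lemma coarea_sym_linear_l (t : R) (n : nat) (eta : nat -> pt) (h h' k : nat -> R) (x : R) :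
  coarea_sym t n eta (fun i => h i + x * h' i) k
  = coarea_sym t n eta h k + x * coarea_sym t n eta h' k.
Proof.
  unfold coarea_sym.
  rewrite <- (Rmult_assoc x), (Rmult_comm x (/ 2)), Rmult_assoc, <- Rmult_plus_distr_l,
    <- sumn_R_add_scal.
  f_equal. apply sumn_R_ext; intros i _. unfold edge_form, Rdiv. ring.
Qed.

Lemma coarea_sym_linear_r (t : R) (n : nat) (eta : nat -> pt) (h k k' : nat -> R) (x : R) :
  coarea_sym t n eta h (fun i => k i + x * k' i)
  = coarea_sym t n eta h k + x * coarea_sym t n eta h k'.
Proof. rewrite !(coarea_sym_comm t n eta h). apply coarea_sym_linear_l. Qed.

Lemma coarea_sym_quadratic (t : R) (n : nat) (eta : nat -> pt) (h k : nat -> R) (x : R) :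
  coarea_sym t n eta (fun i => h i + x * k i) (fun i => h i + x * k i)
  = coarea_sym t n eta h h + 2 * x * coarea_sym t n eta h k
    + x ^ 2 * coarea_sym t n eta k k.
Proof.
  rewrite coarea_sym_linear_l, !coarea_sym_linear_r, (coarea_sym_comm t n eta k h). ring.
Qed.

Lemma coarea_sym_ge0 (t : R) (n : nat) (eta : nat -> pt) (g : nat -> R) :
  labeled t n eta -> 0 <= coarea_sym t n eta g g.
Proof.
  intros Hl. unfold coarea_sym. apply Rmult_le_pos; [lra|].
  apply sumn_R_ge0; intros i Hi.
  pose proof (cosh_phi_gt_1 t n eta i Hl Hi); pose proof (sinh_phi_pos t n eta i Hl Hi).
  apply Rle_mult_inv_pos; [apply edge_form_ge0; lra | assumption].
Qed.

Lemma coarea_sym_eq0 (t : R) (n : nat) (eta : nat -> pt) (g : nat -> R) :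
  labeled t n eta -> coarea_sym t n eta g g = 0 -> forall i, (i < n)%nat -> g i = 0.
Proof.
  intros Hl Hg.
  assert (Hterm_ge0 : forall i, (i < n)%nat -> 0 <=
      edge_form (cosh_phi t n eta i) (g i) (g (nxt n i)) (g i) (g (nxt n i))
      / sinh_phi t n eta i).
  { intros i Hi. pose proof (cosh_phi_gt_1 t n eta i Hl Hi).
    apply Rle_mult_inv_pos; [apply edge_form_ge0; lra | exact (sinh_phi_pos t n eta i Hl Hi)]. }
  intros i Hi. unfold coarea_sym in Hg.
  pose proof (sumn_R_eq0 n _ Hterm_ge0 ltac:(lra) i Hi) as Hterm.
  pose proof (sinh_phi_pos t n eta i Hl Hi) as Hs.
  apply (edge_form_eq0 (cosh_phi t n eta i) _ (g (nxt n i))); [exact (cosh_phi_gt_1 t n eta i Hl Hi)|].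
  apply (f_equal (fun y => y * sinh_phi t n eta i)) in Hterm.
  rewrite Rmult_0_l in Hterm. rewrite <- Hterm. field. lra.
Qed.

Lemma coarea_sym_pos (t : R) (n : nat) (eta : nat -> pt) (g : nat -> R) (i : nat) :
  labeled t n eta -> (i < n)%nat -> g i <> 0 -> 0 < coarea_sym t n eta g g.
Proof.
  intros Hl Hi Hgi. destruct (coarea_sym_ge0 t n eta g Hl) as [Hpos|Hzero]; [exact Hpos|].
  exfalso. exact (Hgi (coarea_sym_eq0 t n eta g Hl (eq_sym Hzero) i Hi)).
Qed.

Lemma coarea_sym_scale_l (t : R) (n : nat) (eta : nat -> pt) (h k : nat -> R) (x : R) :
  coarea_sym t n eta (fun i => x * h i) k = x * coarea_sym t n eta h k.
Proof.
  unfold coarea_sym.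
  rewrite (sumn_R_ext n _ (fun i => x * (edge_form (cosh_phi t n eta i) (h i) (h (nxt n i))
                                          (k i) (k (nxt n i)) / sinh_phi t n eta i)))
    by (intros; unfold edge_form, Rdiv; ring).
  rewrite sumn_R_scal. ring.
Qed.

Lemma quadratic_at_vertex (A B C : R) :
  0 < C -> A + 2 * (- (B / C)) * B + (- (B / C)) ^ 2 * C = (A * C - B ^ 2) / C.
Proof. intros HC. field. lra. Qed.

Lemma discriminant_le (A B C : R) :
  0 < C -> (forall x, 0 <= A + 2 * x * B + x ^ 2 * C) -> B ^ 2 <= A * C.
Proof.
  intros HC Hq. specialize (Hq (- (B / C))). rewrite quadratic_at_vertex in Hq by exact HC.
  apply Rmult_le_compat_r with (r := C) in Hq; [|lra].
  replace ((A * C - B ^ 2) / C * C) with (A * C - B ^ 2) in Hq by (field; lra). lra.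
Qed.

Theorem corollary5p3 (t : R) (n : nat) (eta : nat -> pt) (hP hQ : nat -> R) :
  0 < t ->
  tconvex_data t n eta hP ->
  tconvex_data t n eta hQ ->
  (coarea t n eta hP hQ) ^ 2 <= coarea t n eta hP hP * coarea t n eta hQ hQ /\
  ((coarea t n eta hP hQ) ^ 2 = coarea t n eta hP hP * coarea t n eta hQ hQ <->
   exists lam : R, 0 < lam /\ forall i, (i < n)%nat -> hP i = lam * hQ i).
Proof.
  intros _ [Hn [_ [_ [HPpos [Hl _]]]]] [_ [_ [_ [HQpos _]]]].
  rewrite !coarea_eq_sym by exact Hn.
  pose proof (HPpos O ltac:(lia)) as HP0; pose proof (HQpos O ltac:(lia)) as HQ0.
  assert (HC : 0 < coarea_sym t n eta hQ hQ) by (apply (coarea_sym_pos _ _ _ _ O Hl); [lia | lra]).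
  assert (Hq : forall x, 0 <= coarea_sym t n eta hP hP + 2 * x * coarea_sym t n eta hP hQ
                             + x ^ 2 * coarea_sym t n eta hQ hQ).
  { intros x. rewrite <- coarea_sym_quadratic. apply coarea_sym_ge0, Hl. }
  split; [now apply discriminant_le|]. split.
  - intros Heq. set (lam := coarea_sym t n eta hP hQ / coarea_sym t n eta hQ hQ).
    assert (Hzero := coarea_sym_eq0 t n eta (fun i => hP i + (- lam) * hQ i) Hl).
    rewrite coarea_sym_quadratic in Hzero. unfold lam in Hzero.
    rewrite quadratic_at_vertex, Heq in Hzero by exact HC. fold lam in Hzero.
    specialize (Hzero ltac:(unfold Rminus; rewrite Rplus_opp_r; apply Rdiv_0_l)).
    exists lam. split.
    + apply (Rmult_lt_reg_r (hQ O)); [lra|]. specialize (Hzero O ltac:(lia)). lra.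
    + intros i Hi. specialize (Hzero i Hi). lra.
  - intros [lam [Hlam Hprop]].
    rewrite !(coarea_sym_ext t n eta hP (fun i => lam * hQ i) _ _ Hn Hprop (fun _ _ => eq_refl)),
      (coarea_sym_ext t n eta _ _ hP (fun i => lam * hQ i) Hn (fun _ _ => eq_refl) Hprop).
    rewrite !coarea_sym_scale_l, (coarea_sym_comm t n eta hQ (fun i => lam * hQ i)),
      coarea_sym_scale_l. ring.
Qed.
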